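(* Let $K\ge 2$, $M,N,d$ be positive integers with $d\le \min(M,N)$, and consider the symmetric system $(M\times N,d)^K$ (i.e. $M^{[k]}=M$, $N^{[k]}=N$, $d^{[k]}=d$ for all $k\in\{1,\dots,K\}$). Then this system is proper if and only if $N_v\ge N_e$, and this holds if and only if $M+N-(K+1)d\ge 0$.
   Context: A $K$-user MIMO interference system $\Pi_{k=1}^K(M^{[k]}\times N^{[k]},d^{[k]})$ is specified by positive integers $M^{[k]}$ (transmit antennas of user $k$), $N^{[k]}$ (receive antennas of user $k$) and $d^{[k]}\le\min(M^{[k]},N^{[k]})$ (number of beams of user $k$), $k\in\mathcal{K}=\{1,\dots,K\}$. Its variables are: for each $j\in\mathcal K$ and $n\in\{1,\dots,d^{[j]}\}$ a set $T_{j,n}$ of $M^{[j]}-d^{[j]}$ variables (the free entries of the $n$-th transmit beam of user $j$, normalized so its top $d^{[j]}\times d^{[j]}$ block of the precoder is the identity), and for each $k\in\mathcal K$ and $m\in\{1,\dots,d^{[k]}\}$ a set $R_{k,m}$ of $N^{[k]}-d^{[k]}$ variables (the free entries of the $m$-th receive beam of user $k$); all these sets are pairwise disjoint. The equations are $E^{kj}_{mn}$ (standing for $\mathbf u^{[k]\dagger}_m \mathbf H^{[kj]}\mathbf v^{[j]}_n=0$) for $j,k\in\mathcal K$, $k\ne j$, $m\in\{1,\dots,d^{[k]}\}$, $n\in\{1,\dots,d^{[j]}\}$; let $\mathcal E$ be the set of all of them and set $\mathrm{var}(E^{kj}_{mn})=T_{j,n}\cup R_{k,m}$, so $|\mathrm{var}(E^{kj}_{mn})|=(M^{[j]}-d^{[j]})+(N^{[k]}-d^{[k]})$.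 The system is called proper if for every subset $S\subseteq\mathcal E$, $|S|\le\left|\bigcup_{E\in S}\mathrm{var}(E)\right|$, and improper otherwise. The total numbers of equations and variables are $N_e=\sum_{k,j\in\mathcal K,\,k\ne j} d^{[k]}d^{[j]}$ and $N_v=\sum_{k=1}^K d^{[k]}(M^{[k]}+N^{[k]}-2d^{[k]})$. *)

From mathcomp Require Import all_boot.
Set Implicit Arguments. Unset Strict Implicit. Unset Printing Implicit Defensive.

(* A K-user MIMO interference system is given by K and functions
   M N d : 'I_K -> nat (users are indexed 0..K-1 instead of 1..K). *)

Section Sys.
Variables (K : nat) (M N d : 'I_K -> nat).

(* A bound on all indices occurring below. *)
Definition bnd : nat := \sum_(k < K) (M k + N k).

(* Variables: (side, user, beam, entry).  side = false : transmit variable of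
   T_{user,beam} (entry < M user - d user);  side = true : receive variable of
   R_{user,beam} (entry < N user - d user).  *)
Definition var_t : finType := (bool * 'I_K * 'I_bnd * 'I_bnd)%type.

(* Equation labels (k, j, m, n) standing for E^{kj}_{mn}. *)
Definition eqn_t : finType := ('I_K * 'I_K * 'I_bnd * 'I_bnd)%type.

Definition eqns : {set eqn_t} :=
  [set e : eqn_t | let: (k, j, m, n) := e in
     [&& k != j, (m < d k)%N & (n < d j)%N]].

Definition Tvars (j : 'I_K) (n : nat) : {set var_t} :=
  [set v : var_t | let: (s, u, b, t) := v in
     [&& ~~ s, u == j, (b == n :> nat) & (t < M j - d j)%N]].

Definition Rvars (k : 'I_K) (m : nat) : {set var_t} :=
  [set v : var_t | let: (s, u, b, r) := v in
     [&& s, u == k, (b == m :> nat) & (r < N k - d k)%N]].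

Definition varE (e : eqn_t) : {set var_t} :=
  let: (k, j, m, n) := e in Tvars j n :|: Rvars k m.

Definition proper_sys : Prop :=
  forall S : {set eqn_t}, S \subset eqns ->
    #|S| <= #|\bigcup_(e in S) varE e|.

Definition Ne : nat :=
  \sum_(k < K) \sum_(j < K | k != j) d k * d j.

Definition Nv : nat :=
  \sum_(k < K) d k * (M k + N k - 2 * d k).

End Sys.

From mathcomp Require Import all_boot zify.
Set Implicit Arguments. Unset Strict Implicit. Unset Printing Implicit Defensive.

(* A set S of equations involves exactly the blocks T_{j,n} and R_{k,m} of the
   transmit and receive beams it touches; distinct beams own disjoint blocks, so
   S involves (M-d)|T(S)| + (N-d)|R(S)| variables.  A beam occurs in at most
   (K-1)d equations, one for each beam of another user, hence |S| is at most
   (K-1)d|T(S)| and at most (K-1)d|R(S)|, which is enough as soon as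
   (K-1)d <= (M-d) + (N-d).  Conversely S = E gives Ne <= Nv, and
   Ne = Kd (K-1)d, Nv = Kd ((M-d) + (N-d)). *)

Definition ords_lt (B n : nat) : {set 'I_B} := [set i : 'I_B | i < n].

Lemma card_ords_lt B n : n <= B -> #|ords_lt B n| = n.
Proof.
move=> le_nB; have widen_inj : injective (widen_ord le_nB).
  by move=> i j /(congr1 val) /= /val_inj.
rewrite -[RHS](card_ord n) -(card_imset _ widen_inj).
apply: eq_card => i; rewrite inE; apply/idP/imsetP => [lt_in | [j _ ->]].
  by exists (Ordinal lt_in); last exact: val_inj.
by rewrite /= ltn_ord.
Qed.

Lemma card_le_image_mul (T U V : finType) (f : T -> U) (g : T -> V)
    (A : U -> {set V}) (S : {set T}) c :
  injective (fun e => (f e, g e)) -> {in S, forall e, g e \in A (f e)} ->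
  (forall x, #|A x| <= c) -> #|S| <= #|f @: S| * c.
Proof.
move=> inj_fg gA le_Ac; rewrite -sum1_card (partition_big_imset f) -sum_nat_const.
apply: leq_sum => x _; rewrite sum1dep_card; set F := [set _ in _ | _].
have inj_g : {in F &, injective g}.
  move=> e e'; rewrite !inE => /andP [_ /eqP fe] /andP [_ /eqP fe'] ge.
  by apply: inj_fg; rewrite /= fe fe' ge.
rewrite -(card_in_imset inj_g); apply: leq_trans (le_Ac x).
apply/subset_leq_card/subsetP => y /imsetP [e]; rewrite inE => /andP [Se /eqP <-] ->.
exact: gA.
Qed.

Lemma leq_add_mul_of_leq_mul s p q a b c :
  s <= p * c -> s <= q * c -> c <= a + b -> s <= p * a + q * b.
Proof.
move=> le_sp le_sq le_cab.
have [le_pq | /ltnW le_qp] := leqP p q.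
  apply: leq_trans le_sp _; rewrite (leq_trans (leq_mul (leqnn p) le_cab)) //.
  by rewrite mulnDr leq_add2l leq_mul2r le_pq orbT.
apply: leq_trans le_sq _; rewrite (leq_trans (leq_mul (leqnn q) le_cab)) //.
by rewrite mulnDr leq_add2r leq_mul2r le_qp orbT.
Qed.

Section ConstantSystem.
Variables K M N d : nat.
Hypotheses (K_gt0 : 0 < K) (d_le_M : d <= M) (d_le_N : d <= N).

Notation Mf := (fun _ : 'I_K => M).
Notation Nf := (fun _ : 'I_K => N).
Notation df := (fun _ : 'I_K => d).
Notation B := (bnd Mf Nf).
Notation beam := ('I_K * 'I_B)%type.

Lemma card_ords_lt_bnd n : n <= M + N -> #|ords_lt B n| = n.
Proof.
move=> le_nMN; apply: card_ords_lt; apply: leq_trans le_nMN _.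
by rewrite /bnd big_const_ord iter_addn_0 leq_pmulr.
Qed.

Definition tx_beam (e : eqn_t Mf Nf) : beam := (e.1.1.2, e.2).
Definition rx_beam (e : eqn_t Mf Nf) : beam := (e.1.1.1, e.1.2).

Definition tx_var (x : beam) (t : 'I_B) : var_t Mf Nf := (false, x.1, x.2, t).
Definition rx_var (x : beam) (t : 'I_B) : var_t Mf Nf := (true, x.1, x.2, t).

Lemma Tvars_tx_var (x : beam) : Tvars Mf Nf df x.1 x.2 = tx_var x @: ords_lt B (M - d).
Proof.
case: x => j n; apply/setP => [[[[s u] b] t]]; rewrite inE.
apply/idP/imsetP => [|[t' lt_t' [-> -> -> ->]]].
  case/and4P=> /negbTE -> /eqP -> /eqP /val_inj -> lt_t.
  by exists t; rewrite ?inE.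
by rewrite inE in lt_t'; rewrite /= !eqxx lt_t'.
Qed.

Lemma Rvars_rx_var (x : beam) : Rvars Mf Nf df x.1 x.2 = rx_var x @: ords_lt B (N - d).
Proof.
case: x => k m; apply/setP => [[[[s u] b] t]]; rewrite inE.
apply/idP/imsetP => [|[t' lt_t' [-> -> -> ->]]].
  case/and4P=> -> /eqP -> /eqP /val_inj -> lt_t.
  by exists t; rewrite ?inE.
by rewrite inE in lt_t'; rewrite /= !eqxx lt_t'.
Qed.

Lemma bigcup_varE (S : {set eqn_t Mf Nf}) :
  \bigcup_(e in S) varE df e =
  tx_var @2: (tx_beam @: S, ords_lt B (M - d)) :|: rx_var @2: (rx_beam @: S, ords_lt B (N - d)).
Proof.
rewrite !curry_imset2l !(big_imset_idem _ _ _ (@setUid _)) -big_split /=.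
by apply: eq_bigr => [[[[k j] m] n]] _; rewrite -Tvars_tx_var -Rvars_rx_var.
Qed.

Lemma card_bigcup_varE (S : {set eqn_t Mf Nf}) :
  #|\bigcup_(e in S) varE df e| = #|tx_beam @: S| * (M - d) + #|rx_beam @: S| * (N - d).
Proof.
have tx_inj : injective (uncurry tx_var) by move=> [[j n] t] [[j' n'] t'] [-> -> ->].
have rx_inj : injective (uncurry rx_var) by move=> [[k m] t] [[k' m'] t'] [-> -> ->].
rewrite bigcup_varE cardsU (_ : _ :&: _ = set0) ?cards0 ?subn0; last first.
  apply/setP => v; rewrite !inE; apply/negbTE/andP.
  by case=> /imset2P [x t _ _ ->] /imset2P [? ? _ _].
rewrite !curry_imset2X (card_imset _ tx_inj) (card_imset _ rx_inj) !cardsX.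
by rewrite !card_ords_lt_bnd //; lia.
Qed.

Definition beams : {set beam} := setX [set: 'I_K] (ords_lt B d).
Definition other_beams (x : beam) : {set beam} := setX [set~ x.1] (ords_lt B d).

Lemma card_beams : #|beams| = K * d.
Proof. by rewrite cardsX cardsT card_ord card_ords_lt_bnd //; lia. Qed.

Lemma card_other_beams x : #|other_beams x| = (K - 1) * d.
Proof. by rewrite cardsX cardsC1 card_ord card_ords_lt_bnd ?subn1 //; lia. Qed.

Lemma other_beams_sub x : other_beams x \subset beams.
Proof. by rewrite setXS ?subsetT. Qed.

Lemma eqns_other_beams e : e \in eqns Mf Nf df ->
  rx_beam e \in other_beams (tx_beam e) /\ tx_beam e \in other_beams (rx_beam e).
Proof.
case: e => [[[k j] m] n]; rewrite !inE /= => /and3P [ne_kj -> ->].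
by split; rewrite andbT // eq_sym.
Qed.

Lemma card_eqns : #|eqns Mf Nf df| = K * d * ((K - 1) * d).
Proof.
pose offdiag := [set p : 'I_K * 'I_K | p.1 != p.2].
have -> : eqns Mf Nf df = setX (setX offdiag (ords_lt B d)) (ords_lt B d).
  by apply/setP => [[[[k j] m] n]]; rewrite !inE /= andbA.
have diag : ~: offdiag = [set (i, i) | i in 'I_K].
  apply/setP => [[i j]]; rewrite !inE negbK; apply/eqP/imsetP => [/= -> | [? _ [-> ->]]] //.
  by exists j.
have card_diag : #|~: offdiag| = K by rewrite diag card_imset ?card_ord // => i j [].
have := cardsC offdiag; rewrite card_diag card_prod card_ord => card_offdiag.
rewrite !cardsX card_ords_lt_bnd; last by lia.
have -> : #|offdiag| = K * (K - 1) by rewrite mulnBr muln1 -card_offdiag addnK.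
by rewrite -!mulnA [(K - 1) * _]mulnCA.
Qed.

Lemma Ne_const : Ne df = K * d * ((K - 1) * d).
Proof.
have row k : \sum_(j < K | k != j) d * d = (K - 1) * d * d.
  rewrite (eq_bigl (mem [set~ k])) ?sum_nat_const ?cardsC1 ?card_ord ?subn1 ?mulnA //.
  by move=> j; rewrite /= !inE eq_sym.
rewrite /Ne (eq_bigr _ (fun k _ => row k)) big_const_ord iter_addn_0.
by rewrite mulnC -!mulnA [(K - 1) * _]mulnCA.
Qed.

Lemma Nv_const : Nv Mf Nf df = K * d * ((M - d) + (N - d)).
Proof.
rewrite /Nv big_const_ord iter_addn_0 mulnC mulnA.
by congr (_ * _); lia.
Qed.

Lemma proper_constP : proper_sys Mf Nf df <-> (K - 1) * d <= (M - d) + (N - d).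
Proof.
split => [proper | le_cab S sub_SE].
- have [-> | d_gt0] := posnP d; first by rewrite muln0.
  have image_le f : {in eqns Mf Nf df, forall e, f e \in beams} ->
      #|f @: eqns Mf Nf df| <= K * d.
    move=> f_beams; rewrite -card_beams; apply/subset_leq_card/subsetP.
    by move=> _ /imsetP [e /f_beams beam_e ->].
  have tx_le : #|tx_beam @: eqns Mf Nf df| <= K * d.
    apply: image_le => e /eqns_other_beams [_ tx_other].
    exact: subsetP (other_beams_sub _) _ tx_other.
  have rx_le : #|rx_beam @: eqns Mf Nf df| <= K * d.
    apply: image_le => e /eqns_other_beams [rx_other _].
    exact: subsetP (other_beams_sub _) _ rx_other.
  have := proper _ (subxx _); rewrite card_eqns card_bigcup_varE => le_E_vars.
  rewrite -(@leq_pmul2l (K * d)) ?muln_gt0 ?K_gt0 // (leq_trans le_E_vars) //.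
  by rewrite mulnDr leq_add // leq_mul2r ?tx_le ?rx_le orbT.
- have eqns_S e : e \in S -> e \in eqns Mf Nf df := subsetP sub_SE e.
  have le_other x : #|other_beams x| <= (K - 1) * d by rewrite card_other_beams.
  rewrite card_bigcup_varE; apply: leq_add_mul_of_leq_mul le_cab.
    apply: (card_le_image_mul (g := rx_beam)) le_other.
      by move=> [[[k j] m] n] [[[k' j'] m'] n'] [-> -> -> ->].
    by move=> e /eqns_S /eqns_other_beams [].
  apply: (card_le_image_mul (g := tx_beam)) le_other.
    by move=> [[[k j] m] n] [[[k' j'] m'] n'] [-> -> -> ->].
  by move=> e /eqns_S /eqns_other_beams [].
Qed.
End ConstantSystem.

Theorem theorem1 (K M N d : nat) :
  (2 <= K)%N -> (0 < M)%N -> (0 < N)%N -> (0 < d)%N -> (d <= minn M N)%N ->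
  (proper_sys (fun _ : 'I_K => M) (fun _ => N) (fun _ => d) <->
     (Ne (fun _ : 'I_K => d) <= Nv (fun _ : 'I_K => M) (fun _ => N) (fun _ => d))%N)
  /\
  ((Ne (fun _ : 'I_K => d) <= Nv (fun _ : 'I_K => M) (fun _ => N) (fun _ => d))%N <->
     ((K + 1) * d <= M + N)%N).
Proof.
move=> K_ge2 _ _ d_gt0; rewrite leq_min => /andP [d_le_M d_le_N].
have K_gt0 : 0 < K by apply: leq_trans K_ge2.
rewrite Ne_const Nv_const // leq_pmul2l ?muln_gt0 ?K_gt0 //.
split; first exact: proper_constP.
by rewrite mulnBl mulnDl mul1n; split => ?; lia.
Qed.
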